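(* Let $N\ge2$. The matrix $D^\ddagger$ is invertible, and its inverse $E=(D^\ddagger)^{-1}$ is given by $$E_{ij}=\omega_NM_j(1)+\int_1^{\tau_i}M_j(\tau)\,d\tau\quad(1\le i<N,\ 1\le j<N),$$ $$E_{iN}=-\omega_N\quad(1\le i\le N),\qquad E_{Nj}=\omega_NM_j(1)\quad(1\le j<N),$$ where $M_j(\tau)=\prod_{i=1,i\ne j}^{N-1}\frac{\tau-\tau_i}{\tau_j-\tau_i}$, $1\le j\le N-1$, is the Lagrange basis for the points $\tau_1,\dots,\tau_{N-1}$.
   Context: Let $-1<\tau_1<\dots<\tau_N=1$ and $\omega_1,\dots,\omega_N>0$ be the nodes and weights of the $N$-point Gauss–Radau quadrature rule on $[-1,1]$ with fixed node $+1$ (exact for polynomials of degree $\le 2N-2$). Set $\tau_0=-1$. For $0\le j\le N$ let $L_j(\tau)=\prod_{i=0,i\ne j}^{N}\frac{\tau-\tau_i}{\tau_j-\tau_i}$ and let $D$ be the $N\times(N+1)$ matrix $D_{ij}=L_j'(\tau_i)$, $1\le i\le N$, $0\le j\le N$. Let $D^\ddagger$ be the $N\times N$ matrix $D^\ddagger_{ij}=-(\omega_j/\omega_i)D_{ji}$, $1\le i,j\le N$. *)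

From HB Require Import structures.
From mathcomp Require Import all_boot all_order all_algebra.
Set Implicit Arguments. Unset Strict Implicit. Unset Printing Implicit Defensive.
Import Order.TTheory GRing.Theory Num.Theory.
Local Open Scope ring_scope.

Section Defs.
Variable R : realFieldType.

Definition lagr (tau : nat -> R) (S : seq nat) (j : nat) : {poly R} :=
  \prod_(i <- S | i != j) (('X - (tau i)%:P) * ((tau j - tau i)^-1)%:P).

Definition prim (p : {poly R}) : {poly R} :=
  \poly_(i < (size p).+1) (if i is k.+1 then p`_k / k.+1%:R else 0).

Definition pint (p : {poly R}) (a b : R) : R := (prim p).[b] - (prim p).[a].

Definition LL (N : nat) (tau : nat -> R) (j : nat) := lagr tau (iota 0 N.+1) j.
Definition MM (N : nat) (tau : nat -> R) (j : nat) := lagr tau (iota 1 N.-1) j.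

Definition Dmat (N : nat) (tau : nat -> R) (i j : nat) : R :=
  (LL N tau j)^`().[tau i].

(* D^ddagger, with matrix index i : 'I_N standing for i+1 *)
Definition Dddag (N : nat) (tau w : nat -> R) : 'M[R]_N :=
  \matrix_(i < N, j < N) (- (w j.+1 / w i.+1) * Dmat N tau j.+1 i.+1).

(* The claimed inverse E, with matrix index i : 'I_N standing for i+1 *)
Definition Emat (N : nat) (tau w : nat -> R) : 'M[R]_N :=
  \matrix_(i < N, j < N)
    (if j.+1 == N then - w N
     else if i.+1 == N then w N * (MM N tau j.+1).[1]
     else w N * (MM N tau j.+1).[1] + pint (MM N tau j.+1) 1 (tau i.+1)).

Definition gauss_radau (N : nat) (tau w : nat -> R) : Prop :=
  [/\ tau 0 = -1, -1 < tau 1, (forall i, (1 <= i < N)%N -> tau i < tau i.+1),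
      tau N = 1 & (forall i, (1 <= i <= N)%N -> 0 < w i)] /\
      (forall p : {poly R}, (size p <= (2 * N - 1))%N ->
         \sum_(i < N) w i.+1 * p.[tau i.+1] = pint p (-1) 1).
End Defs.

(* Pair the rows of D^ddagger with the columns of E through the quadrature rule.
   Every column of E samples a polynomial q of degree < N at the nodes: the
   constant -w_N, or Q_j(t) = w_N M_j(1) + int_1^t M_j.  Since the Radau rule is
   exact in degree 2N-2 and tau_0 = -1, tau_N = 1, integration by parts gives
   sum_k w_k L_i'(tau_k) q(tau_k) = [i = N] q(1) - w_i q'(tau_i), hence
   (D^ddagger q(tau))_i = q'(tau_i) - [i = N] q(1) / w_i.  For q = -w_N this is
   the N-th unit vector, and for q = Q_j it is M_j(tau_i) = [i = j] when i < N
   and M_j(1) - M_j(1) = 0 when i = N. *)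
From HB Require Import structures.
From mathcomp Require Import all_boot all_order all_algebra.
From mathcomp Require Import zify ring.
Import Order.TTheory GRing.Theory Num.Theory.
Local Open Scope ring_scope.

Section PolyCalculus.
Variable R : realFieldType.
Implicit Types p q : {poly R}.

Lemma coef_prim p k : (prim p)`_k = if k is k'.+1 then p`_k' / k'.+1%:R else 0.
Proof.
rewrite /prim coef_poly; case: k => [|k] //; case: ltnP => // lt_p_k.
by rewrite nth_default ?mul0r.
Qed.

Lemma size_prim p : (size (prim p) <= (size p).+1)%N.
Proof. exact: size_poly. Qed.

Lemma deriv_prim p : (prim p)^`() = p.
Proof.
apply/polyP => k; rewrite coef_deriv coef_prim -[_ *+ _]mulr_natr divfK //.
by rewrite pnatr_eq0.
Qed.

Lemma prim_deriv p : prim p^`() = p - (p`_0)%:P.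
Proof.
apply/polyP => -[|k]; rewrite coef_prim coefB coefC /= ?subrr //.
by rewrite coef_deriv subr0 -[_ *+ _]mulr_natr mulfK // pnatr_eq0.
Qed.

Lemma pint_deriv p a b : pint p^`() a b = p.[b] - p.[a].
Proof. by rewrite /pint prim_deriv !hornerE; ring. Qed.

Lemma size_deriv_leq p : (size p^`() <= (size p).-1)%N.
Proof.
have [->|p_neq0] := eqVneq p 0; first by rewrite deriv0 size_poly0.
by have := lt_size_deriv p_neq0; lia.
Qed.

End PolyCalculus.

Section Lagrange.
Variables (R : realFieldType) (tau : nat -> R).

Lemma size_prod_seq_leq2 (I : Type) (s : seq I) (P : pred I) (F : I -> {poly R}) :
  (forall i, P i -> (size (F i) <= 2)%N) ->
  (size (\prod_(i <- s | P i) F i)%R <= (count P s).+1)%N.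
Proof.
move=> sizeF; elim: s => [|a s IHs]; first by rewrite big_nil size_poly1.
rewrite big_cons /=; case: ifP => Pa //=.
apply: leq_trans (size_polyMleq _ _) _.
by move: (sizeF a Pa) IHs; set x := size _; set y := size _; lia.
Qed.

Lemma size_lagr (S : seq nat) j : uniq S -> j \in S ->
  (size (lagr tau S j) <= size S)%N.
Proof.
move=> uniqS jS; have size_factor i : (i != j) ->
    (size (('X - (tau i)%:P) * ((tau j - tau i)^-1)%:P)%R <= 2)%N.
  move=> _; apply: leq_trans (size_polyMleq _ _) _.
  rewrite size_XsubC; have := size_polyC_leq1 (tau j - tau i)^-1.
  by case: (size _) => [|[|]].
apply: leq_trans (size_prod_seq_leq2 _ _ _ _ size_factor) _.
rewrite -(count_predC (pred1 j) S) count_uniq_mem // jS add1n.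
by rewrite (@eq_count _ _ (predC (pred1 j))).
Qed.

Lemma lagr_node (S : seq nat) j m :
  {in S &, injective tau} -> j \in S -> m \in S ->
  (lagr tau S j).[tau m] = (m == j)%:R.
Proof.
move=> tau_inj jS mS; rewrite /lagr horner_prod; have [->|m_neq_j] := eqVneq.
  apply: big1_seq => i /andP[i_neq_j iS].
  rewrite !hornerE divff // subr_eq0; apply: contra i_neq_j => /eqP tji.
  by rewrite (tau_inj _ _ jS iS tji).
apply/eqP; rewrite prodf_seq_eq0; apply/hasP; exists m => //.
by rewrite m_neq_j !hornerE subrr mul0r.
Qed.

End Lagrange.

Section GaussRadau.
Variables (R : realFieldType) (N : nat) (tau w : nat -> R).
Hypothesis radau : gauss_radau N tau w.
Implicit Types p q : {poly R}.

Local Notation L := (LL N tau).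
Local Notation M := (MM N tau).

Lemma radau_tau0 : tau 0 = -1. Proof. by case: radau => -[]. Qed.
Lemma radau_tauN : tau N = 1. Proof. by case: radau => -[]. Qed.

Lemma radau_weight_neq0 i : (0 < i <= N)%N -> w i != 0.
Proof. by case: radau => -[_ _ _ _ wpos] _ /wpos /lt0r_neq0. Qed.

Lemma radau_nodes_lt i k : (i < k <= N)%N -> tau i < tau k.
Proof.
case: radau => -[tau0 tau1 tau_lt _ _] _.
have tau_succ m : (m < N)%N -> tau m < tau m.+1.
  by case: m => [|m] ltmN; rewrite ?tau0 //; apply: tau_lt; lia.
elim: k => [|k IHk] /andP[ltik lekN]; first by [].
have [->|neik] := eqVneq i k; first by apply: tau_succ.
by apply: lt_trans (tau_succ k lekN); apply: IHk; lia.
Qed.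

Lemma radau_nodes_inj : {in [pred i | (i <= N)%N] &, injective tau}.
Proof.
move=> i k; rewrite !inE => leiN lekN; case: (ltngtP i k) => // [ltik|ltki] tik.
  by have := radau_nodes_lt i k; rewrite ltik lekN tik ltxx => /(_ isT).
by have := radau_nodes_lt k i; rewrite ltki leiN tik ltxx => /(_ isT).
Qed.

Lemma LL_node i m : (i <= N)%N -> (m <= N)%N -> (L i).[tau m] = (m == i)%:R.
Proof.
move=> leiN lemN; apply: lagr_node; rewrite ?mem_iota; try lia.
by apply: sub_in2 radau_nodes_inj => a; rewrite mem_iota inE; lia.
Qed.

Lemma MM_node j m : (0 < j < N)%N -> (0 < m < N)%N -> (M j).[tau m] = (m == j)%:R.
Proof.
move=> hj hm; apply: lagr_node; rewrite ?mem_iota; try lia.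
by apply: sub_in2 radau_nodes_inj => a; rewrite mem_iota inE; lia.
Qed.

Lemma size_LL i : (i <= N)%N -> (size (L i) <= N.+1)%N.
Proof.
move=> leiN; rewrite -[N.+1](size_iota 0).
by apply: size_lagr; rewrite ?iota_uniq ?mem_iota.
Qed.

Lemma size_MM j : (0 < j < N)%N -> (size (M j) <= N.-1)%N.
Proof.
move=> hj; rewrite -[N.-1](size_iota 1).
by apply: size_lagr; rewrite ?iota_uniq ?mem_iota; lia.
Qed.

Lemma radau_quadrature_deriv p : (size p <= 2 * N)%N ->
  \sum_(k < N) w k.+1 * p^`().[tau k.+1] = p.[1] - p.[-1].
Proof.
case: radau => _ quad size_p; rewrite quad ?pint_deriv //.
by apply: leq_trans (size_deriv_leq _ p) _; lia.
Qed.

Lemma radau_sum_LL_node i (f : nat -> R) : (0 < i <= N)%N ->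
  \sum_(k < N) w k.+1 * (L i).[tau k.+1] * f k.+1 = w i * f i.
Proof.
move=> /andP[i_gt0 leiN]; have ltiN : (i.-1 < N)%N by rewrite prednK.
rewrite (bigD1 (Ordinal ltiN)) //= big1 => [|k /eqP neq_ki].
  by rewrite (prednK i_gt0) LL_node ?eqxx ?mulr1 ?addr0.
have neq_k1i : (k.+1 == i) = false.
  by apply/eqP => ki; apply: neq_ki; apply: val_inj => /=; rewrite -ki.
by rewrite LL_node ?neq_k1i ?mulr0 ?mul0r.
Qed.

(* Integration by parts with the rule; the boundary terms are L_i(-1) = 0
   and L_i(1) = [i = N]. *)
Lemma radau_sum_LL_deriv_mul i q : (0 < i <= N)%N -> (size q <= N)%N ->
  \sum_(k < N) w k.+1 * ((L i)^`() * q).[tau k.+1] =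
  (i == N)%:R * q.[1] - w i * q^`().[tau i].
Proof.
move=> hi size_q.
have parts : (L i)^`() * q = (L i * q)^`() - L i * q^`().
  by rewrite derivM addrK.
under eq_bigr do rewrite parts hornerD hornerN mulrDr mulrN hornerM mulrA.
rewrite sumrB (radau_sum_LL_node i (fun k => q^`().[tau k])) //.
rewrite radau_quadrature_deriv; last first.
  apply: leq_trans (size_polyMleq _ _) _.
  by have := size_LL i; lia.
rewrite !hornerM -{1}radau_tauN -radau_tau0 !LL_node // ?eqxx; try lia.
have -> : (0%N == i) = false by case: i {parts} hi.
by rewrite eq_sym mul0r subr0.
Qed.

Lemma Dddag_mul_horner (i : 'I_N) q : (size q <= N)%N ->
  \sum_(k < N) Dddag N tau w i k * q.[tau k.+1] =
  q^`().[tau i.+1] - (i.+1 == N)%:R * q.[1] / w i.+1.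
Proof.
move=> size_q; have ltiN := ltn_ord i.
have wi_neq0 : w i.+1 != 0 by apply: radau_weight_neq0.
transitivity (- (w i.+1)^-1 * \sum_(k < N) w k.+1 * ((L i.+1)^`() * q).[tau k.+1]).
  rewrite mulr_sumr; apply: eq_bigr => k _.
  by rewrite mxE /Dmat hornerM; field.
by rewrite radau_sum_LL_deriv_mul //; field.
Qed.

Definition Ecolumn_poly j : {poly R} :=
  if j == N then (- w N)%:P
  else prim (M j) + (w N * (M j).[1] - (prim (M j)).[1])%:P.

Lemma Emat_horner i k : Emat N tau w i k = (Ecolumn_poly k.+1).[tau i.+1].
Proof.
rewrite mxE /Ecolumn_poly /pint; case: eqP => _; first by rewrite hornerC.
by rewrite hornerD hornerC; case: eqP => [->|_]; rewrite ?radau_tauN; ring.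
Qed.

Lemma size_Ecolumn_poly j : (0 < j <= N)%N -> (size (Ecolumn_poly j) <= N)%N.
Proof.
rewrite /Ecolumn_poly => hj; case: eqP => [_|neq_jN].
  by apply: leq_trans (size_polyC_leq1 _) _; lia.
apply: leq_trans (size_polyD _ _) _; rewrite geq_max; apply/andP; split.
  by apply: leq_trans (size_prim _ _) _; have := size_MM j; lia.
by apply: leq_trans (size_polyC_leq1 _) _; lia.
Qed.

Lemma Dddag_mulmx_Emat : Dddag N tau w *m Emat N tau w = 1%:M.
Proof.
apply/matrixP => i k; rewrite !mxE.
have [ltiN ltkN] := (ltn_ord i, ltn_ord k).
have wi_neq0 : w i.+1 != 0 by apply: radau_weight_neq0.
under eq_bigr do rewrite Emat_horner.
rewrite Dddag_mul_horner; last exact: size_Ecolumn_poly.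
have eq_ik : (i == k) = (i.+1 == k.+1) by [].
rewrite /Ecolumn_poly eq_ik; case: (eqVneq k.+1 N) => [-> | neq_kN].
  rewrite derivC !hornerE; case: eqP => [iN | _]; last by rewrite !mul0r oppr0.
  by rewrite iN in wi_neq0 *; rewrite mul1r mulNr opprK divff.
rewrite derivD deriv_prim derivC addr0 hornerD hornerC addrCA subrr addr0.
have [iN | neq_iN] := eqVneq i.+1 N.
  rewrite iN in wi_neq0 *; rewrite ?eqxx eq_sym (negbTE neq_kN) radau_tauN.
  by rewrite mul1r mulrAC divff // mul1r subrr.
by rewrite mul0r mul0r subr0 MM_node //; lia.
Qed.

End GaussRadau.

Theorem proposition9p1 (R : realFieldType) (N : nat) (tau w : nat -> R) :
  (2 <= N)%N -> gauss_radau N tau w ->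
  Dddag N tau w \in unitmx /\ invmx (Dddag N tau w) = Emat N tau w.
Proof.
move=> _ radau; have DE := @Dddag_mulmx_Emat R N tau w radau.
have [unitD _] := mulmx1_unit DE; split => //.
by rewrite -[RHS](mulKmx unitD) DE mulmx1.
Qed.
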